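(* Let $G$ be a connected graph which is not a tree. If the length of the longest cycle in $G$ is at most $4$, then $G$ has no good vertex.
   Context: All graphs are finite, simple, undirected. For a connected graph $G$, the Wiener index is $W(G)=\sum_{\{u,v\}\subseteq V(G)} \mathrm{dist}_G(u,v)$, the sum over unordered pairs of distinct vertices; the Wiener index of a disconnected graph is defined to be $\infty$. A vertex $v$ of a connected graph $G$ is good if $W(G)=W(G-v)$, where $G-v$ is obtained by deleting $v$ and its incident edges. *)

(* A simple graph G = (V, e) : vertex set V : {set T} of a
   finType T, adjacency e : rel T (assumed symmetric and irreflexive in the
   theorem); the graph on V is the subgraph of (T, e) induced by V. *)
From mathcomp Require Import all_boot all_order.
Set Implicit Arguments. Unset Strict Implicit. Unset Printing Implicit Defensive.

Section Graphs.
Variables (T : finType) (e : rel T).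

Definition relV (V : {set T}) : rel T := fun a b => [&& a \in V, b \in V & e a b].

Definition connectedb (V : {set T}) : bool :=
  [forall x in V, forall y in V, connect (relV V) x y].

Definition walkb (V : {set T}) (x y : T) (k : nat) : bool :=
  [exists t : k.-tuple T, path (relV V) x t && (last x t == y)].

(* distance in the graph on V: least k such that a walk of length k exists
   (searched among 0 .. #|T|-1, which contains the true distance whenever
   x, y lie in the same component of the graph on V) *)
Definition dist (V : {set T}) (x y : T) : nat :=
  find (walkb V x y) (iota 0 #|T|).

(* Wiener index: sum of distances over unordered pairs of distinct vertices;
   None encodes infinity (disconnected graph). *)
Definition wiener (V : {set T}) : option nat :=
  if connectedb V then
    Some (\sum_(u in V) \sum_(w in V | (enum_rank u < enum_rank w)%N) dist V u w)
  else None.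

Definition good (V : {set T}) (v : T) : Prop :=
  v \in V /\ wiener V = wiener (V :\ v).

Definition is_cycle (V : {set T}) (c : seq T) : bool :=
  [&& all (mem V) c, ucycleb e c & (3 <= size c)%N].

Definition is_tree (V : {set T}) : Prop :=
  connectedb V /\ ~ (exists c, is_cycle V c).

End Graphs.

(* If v were good, G - v would be connected.  A shortest walk between two
   vertices other than v that passes through v does so along a - v - b; as
   G - v joins a to b and every cycle has length at most 4, the vertices a and
   b are equal, adjacent, or have a common neighbour other than v, so the walk
   can be rerouted around v without getting longer.  Hence deleting v does not
   increase the remaining distances, while the pairs containing v contribute a
   positive amount to W(G), so W(G - v) < W(G).  The cycle is used only to
   provide a vertex other than v. *)

From mathcomp Require Import all_boot all_order.
Set Implicit Arguments. Unset Strict Implicit. Unset Printing Implicit Defensive.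

Lemma ltn_sum_subpred (I : finType) (P Q : pred I) (F G : I -> nat) i0 :
  (forall i, P i -> Q i) -> (forall i, P i -> F i <= G i) ->
  Q i0 -> ~~ P i0 -> 0 < G i0 ->
  \sum_(i | P i) F i < \sum_(i | Q i) G i.
Proof.
move=> PQ FG Qi0 Pi0 Gi0.
have le_FG : \sum_(i | P i) F i <= \sum_(i | P i) G i by exact: leq_sum.
apply: leq_ltn_trans le_FG _.
rewrite [X in _ < X](bigID P) /= (eq_bigl P) => [|i].
  rewrite -[X in X < _]addn0 ltn_add2l (bigD1 i0) ?Qi0 //=.
  exact: ltn_addr.
by apply/andb_idl/PQ.
Qed.

Section Distance.
Variables (T : finType) (e : rel T) (V : {set T}).

Lemma walkb_path x s : path (relV e V) x s -> walkb e V x (last x s) (size s).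
Proof. by move=> xs; apply/existsP; exists (in_tuple s); rewrite xs eqxx. Qed.

Lemma dist_le_walkb x y k : walkb e V x y k -> k < #|T| -> dist e V x y <= k.
Proof.
move=> wk k_lt; rewrite leqNgt; apply/negP => /(before_find 0).
by rewrite nth_iota // wk.
Qed.

Lemma walkb_dist x y k : walkb e V x y k -> k < #|T| ->
  walkb e V x y (dist e V x y) /\ dist e V x y < #|T|.
Proof.
move=> wk k_lt; have has_k : has (walkb e V x y) (iota 0 #|T|).
  by apply/hasP; exists k; rewrite ?mem_iota.
have := has_k; rewrite has_find size_iota => d_lt.
by have := nth_find 0 has_k; rewrite nth_iota.
Qed.

Lemma connect_walkb x y :
  connect (relV e V) x y -> exists2 k, k < #|T| & walkb e V x y k.
Proof.
case/connectP=> p /shortenP[q xq uq _] ->; exists (size q); last exact: walkb_path.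
by have := max_card (mem (x :: q)); rewrite (card_uniqP uq).
Qed.

Lemma dist_gt0 x y : x != y -> 0 < dist e V x y.
Proof.
move=> xy; have : 0 < #|T| by apply/card_gt0P; exists x.
rewrite /dist; case: #|T| => //= n _; case: ifP => // /existsP[t].
by rewrite tuple0 /= => /eqP yx; rewrite yx eqxx in xy.
Qed.

Lemma path_relV x s : path (relV e V) x s -> path e x s /\ all (mem V) s.
Proof.
elim: s x => //= a s IHs x /andP[/and3P[_ aV xa] /IHs[as_ sV]].
by rewrite xa as_ aV.
Qed.

Lemma connectedb_connect x y :
  connectedb e V -> x \in V -> y \in V -> connect (relV e V) x y.
Proof. by move=> /forall_inP/(_ x) connV /connV/forall_inP; apply. Qed.

Definition rank_pairs : pred (T * T) :=
  [pred p | [&& p.1 \in V, p.2 \in V & enum_rank p.1 < enum_rank p.2]].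

Definition wiener_sum : nat := \sum_(p | rank_pairs p) dist e V p.1 p.2.

Lemma wienerE :
  wiener e V = if connectedb e V then Some wiener_sum else None.
Proof. by rewrite /wiener /wiener_sum pair_big_dep. Qed.

End Distance.

Section DeleteVertex.
Variables (T : finType) (e : rel T) (v : T).
Hypotheses (e_sym : symmetric e) (e_irr : irreflexive e).
Hypothesis cycle_le4 : forall c : seq T, is_cycle e [set: T] c -> size c <= 4.
Hypothesis connected_Gv : connectedb e ([set: T] :\ v).

Local Notation Vv := ([set: T] :\ v).

Lemma in_setTD1 u : (u \in Vv) = (u != v).
Proof. by rewrite in_setD1 in_setT andbT. Qed.

Lemma adj_neq x y : e x y -> x != y.
Proof. by apply: contraTneq => ->; rewrite e_irr. Qed.

Lemma common_neighbor a b : e a v -> e v b -> a != b -> ~~ e a b ->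
  exists2 c, c != v & e a c && e c b.
Proof.
move=> av vb ab not_ab.
have aVv : a \in Vv by rewrite in_setTD1 adj_neq.
have bVv : b \in Vv by rewrite in_setTD1 eq_sym adj_neq.
have /connectP[p] := connectedb_connect connected_Gv aVv bVv.
case/shortenP=> q aq uq _ {p} b_last; subst b.
have [aq_e pVv] := path_relV aq.
have v_notin : v \notin a :: q.
  apply/negP; rewrite inE => /orP[/eqP va | /(allP pVv)].
    by rewrite va e_irr in av.
  by rewrite /= in_setTD1 eqxx.
have vaq_cycle : is_cycle e [set: T] (v :: a :: q).
  apply/and3P; split; first by apply/allP => z _; rewrite /= in_setT.
    by rewrite /ucycleb /= rcons_path e_sym av aq_e /= e_sym vb v_notin.
  by rewrite /= !ltnS lt0n size_eq0; apply: contraNneq ab => ->.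
(* The cycle [v :: a :: q] has length at most 4, so [q] is [:: b] or [:: c; b]. *)
move: (cycle_le4 vaq_cycle) ab not_ab aq pVv.
clear vb bVv uq aq_e v_notin vaq_cycle.
case: q => [|c [|b [|]]] //=; first by rewrite eqxx.
  by move=> _ _ /negPf a_c /andP[/and3P[_ _]]; rewrite a_c.
move=> _ _ _ /and3P[/and3P[_ _ ac] /and3P[_ _ cb] _] /and3P[cVv _ _].
by exists c; rewrite -?in_setTD1 ?ac.
Qed.

Lemma bypass_vertex a b : a != v -> b != v -> e a v -> e v b ->
  exists p, [/\ path (relV e Vv) a p, last a p = b & size p <= 2].
Proof.
move=> a_v b_v av vb; have aVv : a \in Vv by rewrite in_setTD1.
have bVv : b \in Vv by rewrite in_setTD1.
have [<-|ab] := eqVneq a b; first by exists [::].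
have [a_b|not_ab] := boolP (e a b); first by exists [:: b]; rewrite /= /relV aVv bVv a_b.
have [c c_v /andP[ac cb]] := common_neighbor av vb ab not_ab.
exists [:: c; b]; have cVv : c \in Vv by rewrite in_setTD1.
by rewrite /= /relV aVv bVv cVv ac cb.
Qed.

Lemma avoid_path x s : x != v -> last x s != v -> path e x s ->
  exists s', [/\ path (relV e Vv) x s', last x s' = last x s & size s' <= size s].
Proof.
have [n] := ubnP (size s); elim: n => // n IHn in x s *.
case: s => [|a s] /= size_s x_v last_v; first by exists [::].
case/andP=> xa as_; have [va|a_v] := eqVneq a v.
  subst a; case: s size_s last_v as_ => [|b s] /= size_s last_v.
    by rewrite eqxx in last_v.
  case/andP=> vb bs.
  have b_v : b != v by rewrite eq_sym adj_neq.
  have [p [xp p_last size_p]] := bypass_vertex x_v b_v xa vb.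
  have [s' [bs' s'_last size_s']] := IHn b s (ltnW size_s) b_v last_v bs.
  exists (p ++ s'); rewrite cat_path last_cat p_last xp bs' s'_last size_cat.
  by split=> //; rewrite -addn2 addnC leq_add.
have [s' [as' s'_last size_s']] := IHn a s size_s a_v last_v as_.
exists (a :: s'); rewrite /= s'_last /relV !in_setTD1 x_v a_v xa as'.
by split.
Qed.

Lemma dist_setD1_le u w : connectedb e [set: T] -> u != v -> w != v ->
  dist e Vv u w <= dist e [set: T] u w.
Proof.
move=> connected_G u_v w_v.
have [k k_lt wk] :=
  connect_walkb (connectedb_connect connected_G (in_setT u) (in_setT w)).
have [/existsP[t /andP[ut /eqP t_last]] d_lt] := walkb_dist wk k_lt.
have [ut_e _] := path_relV ut.
have last_v : last u t != v by rewrite t_last.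
have [s' [us' s'_last size_s']] := avoid_path u_v last_v ut_e.
rewrite size_tuple t_last in s'_last size_s'.
have := walkb_path us'; rewrite s'_last => /dist_le_walkb le_d.
exact: leq_trans (le_d (leq_ltn_trans size_s' d_lt)) size_s'.
Qed.

Lemma wiener_sum_setD1_lt w : w != v -> connectedb e [set: T] ->
  wiener_sum e Vv < wiener_sum e [set: T].
Proof.
move=> w_v connected_G.
have [p p_pair p_v] : exists2 p : T * T, rank_pairs [set: T] p & v \in [:: p.1; p.2].
  have [vw|wv|/val_inj/enum_rank_inj vw] := ltngtP (enum_rank v) (enum_rank w).
  - by exists (v, w); rewrite /rank_pairs /= ?in_setT ?vw ?inE ?eqxx.
  - by exists (w, v); rewrite /rank_pairs /= ?in_setT ?wv ?inE ?eqxx ?orbT.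
  - by rewrite vw eqxx in w_v.
apply: (ltn_sum_subpred (i0 := p)) => [[u u'] | [u u'] | | |]; rewrite /rank_pairs /=.
- by rewrite !in_setT => /and3P[].
- by case/and3P; rewrite !in_setTD1 => u_v u'_v _; apply: dist_setD1_le.
- exact: p_pair.
- by move: p_v; rewrite !inE => /orP[]/eqP <-; rewrite eqxx ?andbF.
- case/and3P: p_pair => _ _ lt_p; apply: (dist_gt0 e).
  by apply: contraTneq lt_p => ->; rewrite ltnn.
Qed.

End DeleteVertex.

Theorem theorem4 (T : finType) (e : rel T) :
  symmetric e -> irreflexive e ->
  connectedb e [set: T] ->
  ~ is_tree e [set: T] ->
  (forall c : seq T, is_cycle e [set: T] c -> (size c <= 4)%N) ->
  forall v : T, ~ good e [set: T] v.
Proof.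
move=> e_sym e_irr connected_G not_tree cycle_le4 v [_ good_v].
apply: not_tree; split=> // -[c /and3P[_ /andP[_ uniq_c] size_c]].
have [w w_v] : exists w, w != v.
  have : 1 < #|T| by rewrite (leq_trans (ltnW size_c)) // -(card_uniqP uniq_c) max_card.
  case/card_gt1P=> x [y [_ _ xy]].
  by have [xv|] := eqVneq x v; [exists y; rewrite -xv eq_sym | exists x].
move: good_v; rewrite !wienerE connected_G; case: ifP => // connected_Gv [].
by apply/eqP; rewrite gtn_eqF // (wiener_sum_setD1_lt e_sym e_irr cycle_le4 connected_Gv w_v).
Qed.
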